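(* Let $m\in\{1,2\}$ and $\gamma\in(1,2]$. Then $z_m<z_g$ and for every $z\in[z_m,z_g]$ one has $C(V_1;\gamma,z,P_6)<C_1$. Consequently any $z\in[z_m,z_M]$ with $C(V_1;\gamma,z,P_6)=C_1$ lies in $(z_g,z_M]$.
   Context: Fix $m\in\{1,2\}$. For $z>0$ put $\lambda=1+m\gamma z$, $a_1=1+\frac{m(\gamma-1)}{2}$, $a_2=\frac{m(\gamma-1)+mz\gamma(\gamma-3)}{2}$, $a_3=\frac{mz\gamma(\gamma-1)}{2}$, $G(V,C;\gamma,z)=C^2[(m+1)V+2mz]-V(1+V)(\lambda+V)$, $F(V,C;\gamma,z)=C\{C^2[1+\frac{mz}{1+V}]-a_1(1+V)^2+a_2(1+V)-a_3\}$; ODE $\frac{dC}{dV}=\frac FG$. $V_1=-\frac2{\gamma+1}$, $C_1=\frac{\sqrt{2\gamma(\gamma-1)}}{\gamma+1}$. $z_M=(\sqrt\gamma+\sqrt2)^{-2}$, $z_m=\frac{\gamma-1}{(2\gamma-1)(\gamma+1)}$; $w(z)=\sqrt{1-2(\gamma+2)z+(\gamma-2)^2z^2}$, $V_6=\frac{-1+(\gamma-2)z-w}{2}$, $C_6=1+V_6$, $P_6=(V_6,C_6)$. $z_g$: the value of $z$ with $V_6(z)=\frac{-2(1+m\gamma z)}{\gamma+1+m(\gamma-1)}$; explicitly $z_g=\frac{\sqrt{\gamma^2+(\gamma-1)^2}-\gamma}{\gamma(\gamma-1)}$ ($m=1$), $z_g=\frac{\sqrt{(2\gamma^2-\gamma+1)^2+2\gamma(\gamma-1)[4\gamma(\gamma-1)+8/3]}-(2\gamma^2-\gamma+1)}{\gamma[4\gamma(\gamma-1)+8/3]}$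 ($m=2$). For $z\in[z_m,z_M]$, $C(\cdot;\gamma,z,P_6):[V_1,V_6]\to(0,\infty)$ is the real-analytic solution of the ODE near $V_6$ with $C(V_6)=C_6$ and $C'(V_6)$ equal to the unique negative root of $-G_Cc^2+(F_C-G_V)c+F_V=0$ (partials at $P_6$), continued to $[V_1,V_6]$. *)

From Stdlib Require Import Reals Lra.
From Coquelicot Require Import Coquelicot.
Open Scope R_scope.

Section Defs.
Variables (m : nat) (gam z : R).
Let mr := INR m.

Definition lam : R := 1 + mr * gam * z.
Definition a1c : R := 1 + mr * (gam - 1) / 2.
Definition a2c : R := (mr * (gam - 1) + mr * z * gam * (gam - 3)) / 2.
Definition a3c : R := mr * z * gam * (gam - 1) / 2.

Definition Gf (V C : R) : R :=
  C ^ 2 * ((mr + 1) * V + 2 * mr * z) - V * (1 + V) * (lam + V).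
Definition Ff (V C : R) : R :=
  C * (C ^ 2 * (1 + mr * z / (1 + V)) - a1c * (1 + V) ^ 2 + a2c * (1 + V) - a3c).

Definition wz : R := sqrt (1 - 2 * (gam + 2) * z + (gam - 2) ^ 2 * z ^ 2).
Definition V6 : R := (-1 + (gam - 2) * z - wz) / 2.
Definition C6 : R := 1 + V6.

Definition GV6 : R := Derive (fun V => Gf V C6) V6.
Definition GC6 : R := Derive (fun C => Gf V6 C) C6.
Definition FV6 : R := Derive (fun V => Ff V C6) V6.
Definition FC6 : R := Derive (fun C => Ff V6 C) C6.

Definition neg_slope6 (c : R) : Prop :=
  c < 0 /\ - GC6 * c ^ 2 + (FC6 - GV6) * c + FV6 = 0.

End Defs.

Definition V1g (gam : R) : R := - 2 / (gam + 1).
Definition C1g (gam : R) : R := sqrt (2 * gam * (gam - 1)) / (gam + 1).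

Definition zM (gam : R) : R := / (sqrt gam + sqrt 2) ^ 2.
Definition zmin (gam : R) : R := (gam - 1) / ((2 * gam - 1) * (gam + 1)).

Definition zg (m : nat) (gam : R) : R :=
  if Nat.eqb m 1 then
    (sqrt (gam ^ 2 + (gam - 1) ^ 2) - gam) / (gam * (gam - 1))
  else
    (sqrt ((2 * gam ^ 2 - gam + 1) ^ 2
           + 2 * gam * (gam - 1) * (4 * gam * (gam - 1) + 8 / 3))
     - (2 * gam ^ 2 - gam + 1))
    / (gam * (4 * gam * (gam - 1) + 8 / 3)).

(* f is the solution C(.;gam,z,P6) on [V1,V6]: positive on [V1,V6],
   real-analytic near V6 with f(V6) = C6 and f'(V6) the negative root,
   solving dC/dV = F/G on (V1,V6), and continuous at V1 from the right. *)
Definition is_C_P6 (m : nat) (gam z : R) (f : R -> R) : Prop :=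
  (forall V, V1g gam <= V <= V6 gam z -> 0 < f V) /\
  (exists (r : R) (a : nat -> R), 0 < r /\
     (forall V, Rabs (V - V6 gam z) < r -> is_pseries a (V - V6 gam z) (f V))) /\
  f (V6 gam z) = C6 gam z /\
  (exists c, neg_slope6 m gam z c /\ is_derive f (V6 gam z) c) /\
  (forall V, V1g gam < V < V6 gam z ->
     Gf m gam z V (f V) <> 0 /\
     is_derive f V (Ff m gam z V (f V) / Gf m gam z V (f V))) /\
  filterlim f (at_right (V1g gam)) (locally (f (V1g gam))).

From Stdlib Require Import Reals Lra Psatz ZArith List.
From Coquelicot Require Import Coquelicot.
Import ListNotations.
Open Scope R_scope.
Set Bullet Behavior "Strict Subproofs".

(* Let L be the line C = 1 + 2 V6 - V of slope -1 through P6 = (V6, 1 + V6).  The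
   characteristic quadratic at P6 has roots of opposite signs and is positive at -1, so the
   trajectory leaves P6 with slope c in (-1, 0) and lies below L just to the left of V6.
   On L, for V1 < V < V6, both G and F + G are negative, so the field slope F/G exceeds -1
   and the trajectory cannot reach L again as V decreases.  Hence C(V1) <= 1 + 2 V6 - V1,
   which is below C1 as soon as V6 < -1/gamma, i.e. for z < zc = (gamma-1)/(gamma(3 gamma-2));
   and z_g < zc.  Every sign condition is a polynomial inequality in coordinates
   (t, w, v) in (0,1] x (0,1] x (0,1), certified by the nonnegative Bernstein coefficients of
   its numerator. *)

(** * A barrier lemma *)

Lemma derivable_pt_lim_neg_locally (h : R -> R) x d :
  derivable_pt_lim h x d -> d < 0 ->
  exists eps, 0 < eps /\ (forall y, x < y < x + eps -> h y < h x) /\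
                        (forall y, x - eps < y < x -> h x < h y).
Proof.
  intros Hd Hneg.
  destruct (Hd (- d / 2)) as [del Hdel]; [lra|].
  assert (Hq : forall y, y <> x -> Rabs (y - x) < del -> (h y - h x) * (y - x) < 0).
  { intros y Hyx Hy.
    assert (Hyx' : y - x <> 0) by lra.
    specialize (Hdel (y - x) Hyx' Hy). replace (x + (y - x)) with y in Hdel by ring.
    apply Rabs_def2 in Hdel.
    replace ((h y - h x) * (y - x)) with ((h y - h x) / (y - x) * (y - x) ^ 2) by (field; lra).
    apply Rmult_neg_pos; [lra | apply pow2_gt_0; lra]. }
  exists del. split; [apply cond_pos|]. split; intros y Hy.
  - assert (Hy' := Hq y ltac:(lra) ltac:(rewrite Rabs_right; lra)). nra.
  - assert (Hy' := Hq y ltac:(lra) ltac:(rewrite Rabs_left; lra)). nra.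
Qed.

Lemma derivable_pt_lim_eps_continuity (h : R -> R) x d : derivable_pt_lim h x d ->
  forall e, 0 < e -> exists del, 0 < del /\
    forall y, Rabs (y - x) < del -> Rabs (h y - h x) < e.
Proof.
  intros Hd e He.
  destruct (derivable_continuous_pt h x (exist _ _ Hd) e He) as [del [Hdel Hc]].
  exists del. split; [lra|]. intros y Hy.
  destruct (Req_dec y x) as [->|Hyx]; [rewrite Rminus_diag, Rabs_R0; lra|].
  apply (Hc y). split; [split; [exact I | congruence] | exact Hy].
Qed.

Lemma pos_left_of_down_crossings (h dh : R -> R) a b d :
  a < b -> h b = 0 -> derivable_pt_lim h b d -> d < 0 ->
  (forall s, a < s < b -> derivable_pt_lim h s (dh s)) ->
  (forall s, a < s < b -> h s = 0 -> dh s < 0) ->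
  forall x, a < x < b -> 0 < h x.
Proof.
  intros Hab Hhb Hdb Hdbneg Hd Hcross x0 Hx0.
  destruct (Rlt_or_le 0 (h x0)) as [|Hx0neg]; [assumption | exfalso].
  destruct (derivable_pt_lim_neg_locally h b _ Hdb Hdbneg) as [e0 [He0 [_ Hleft]]].
  set (S := fun x => x0 <= x < b /\ h x <= 0).
  assert (HSb : forall x, S x -> x <= b - e0).
  { intros x [Hx Hhx]. destruct (Rle_or_lt x (b - e0)) as [|Hlt]; [assumption|].
    specialize (Hleft x ltac:(lra)). lra. }
  destruct (completeness S) as [s [Hub Hlub]].
  { exists (b - e0). intros x Hx. now apply HSb. }
  { exists x0. split; lra. }
  assert (Hs : x0 <= s <= b - e0).
  { split; [apply Hub; split; lra | apply Hlub; intros x Hx; now apply HSb]. }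
  assert (Hcont := derivable_pt_lim_eps_continuity h s _ (Hd s ltac:(lra))).
  assert (Hright : ~ exists y, s < y < b /\ h y <= 0).
  { intros [y [Hy Hhy]]. assert (y <= s) by (apply Hub; split; lra). lra. }
  (* Each sign of [h s] contradicts [s] being the supremum of [S]. *)
  destruct (Rtotal_order (h s) 0) as [Hneg|[Hzero|Hpos]].
  - destruct (Hcont (- h s) ltac:(lra)) as [del [Hdel Hc]].
    apply Hright. exists (s + Rmin del (b - s) / 2).
    pose proof (Rmin_l del (b - s)). pose proof (Rmin_r del (b - s)).
    assert (0 < Rmin del (b - s)) by (apply Rmin_pos; lra).
    split; [lra|].
    specialize (Hc (s + Rmin del (b - s) / 2) ltac:(rewrite Rabs_right; lra)).
    apply Rabs_def2 in Hc. lra.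
  - destruct (derivable_pt_lim_neg_locally h s _ (Hd s ltac:(lra))
                (Hcross s ltac:(lra) Hzero)) as [e1 [He1 [Hr _]]].
    apply Hright. exists (s + Rmin e1 (b - s) / 2).
    pose proof (Rmin_l e1 (b - s)). pose proof (Rmin_r e1 (b - s)).
    assert (0 < Rmin e1 (b - s)) by (apply Rmin_pos; lra).
    split; [lra|]. specialize (Hr (s + Rmin e1 (b - s) / 2) ltac:(lra)). lra.
  - destruct (Hcont (h s) Hpos) as [del [Hdel Hc]].
    assert (Hx0s : x0 < s) by (destruct (Req_dec x0 s) as [E|]; [subst; lra | lra]).
    assert (Hbound : is_upper_bound S (Rmax x0 (s - del / 2))).
    { intros x [Hx Hhx]. apply Rnot_lt_le. intros Hlt.
      assert (x <= s) by (apply Hub; split; lra).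
      pose proof (Rmax_l x0 (s - del / 2)). pose proof (Rmax_r x0 (s - del / 2)).
      specialize (Hc x ltac:(apply Rabs_def1; lra)). apply Rabs_def2 in Hc. lra. }
    specialize (Hlub _ Hbound). unfold Rmax in Hlub.
    destruct (Rle_dec x0 (s - del / 2)); lra.
Qed.

Lemma below_line_of_crossing_slopes (f df : R -> R) a b K c :
  a < b -> f b = K - b -> is_derive f b c -> -1 < c ->
  (forall V, a < V < b -> is_derive f V (df V)) ->
  (forall V, a < V < b -> f V = K - V -> -1 < df V) ->
  forall V, a < V < b -> f V < K - V.
Proof.
  intros Hab Hfb Hdb Hc Hd Hcross V HV.
  assert (Hh : forall s d, is_derive f s d ->
            derivable_pt_lim (fun x => K - x - f x) s (-1 - d)).
  { intros s d Hs. apply derivable_pt_lim_minus; [| now apply is_derive_Reals].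
    replace (-1) with (0 - 1) by ring.
    apply derivable_pt_lim_minus; [apply derivable_pt_lim_const | apply derivable_pt_lim_id]. }
  enough (0 < K - V - f V) by lra.
  apply (pos_left_of_down_crossings (fun x => K - x - f x) (fun x => -1 - df x) a b (-1 - c));
    [lra | lra | now apply Hh | lra | intros s Hs; apply Hh, Hd, Hs | | exact HV].
  intros s Hs Hs0. specialize (Hcross s Hs ltac:(lra)). lra.
Qed.

Lemma le_of_lt_at_right (f g : R -> R) a b :
  a < b -> filterlim f (at_right a) (locally (f a)) -> continuous g a ->
  (forall V, a < V < b -> f V < g V) -> f a <= g a.
Proof.
  intros Hab Hf Hg Hlt.
  apply (filterlim_le (F := at_right a) f g (f a) (g a)); [| exact Hf |].
  - exists (mkposreal (b - a) ltac:(lra)). intros y Hy Hay.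
    apply Rlt_le, Hlt. split; [exact Hay|].
    apply (AbsRing_norm_compat2 R_AbsRing) in Hy. simpl in Hy.
    unfold abs, minus, plus, opp in Hy; simpl in Hy. apply Rabs_def2 in Hy. lra.
  - exact (filterlim_filter_le_1 _ (filter_le_within _) Hg).
Qed.

(** * Bernstein positivity certificates *)

Record bterm : Type := BT { bcoef : Z; bdeg_t : nat; bdeg_w : nat; bdeg_v : nat }.

Definition bern (n : nat) (x : R) (i : nat) : R := x ^ i * (1 - x) ^ (n - i).

Definition bern_poly (dt dw dv : nat) (cs : list bterm) (t w v : R) : R :=
  fold_right (fun b s => IZR (bcoef b) * bern dt t (bdeg_t b) * bern dw w (bdeg_w b)
                          * bern dv v (bdeg_v b) + s) 0 cs.

Definition bern_cert (dt dw : nat) (cs : list bterm) : bool :=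
  match cs with
  | b :: _ => (0 <? bcoef b)%Z && Nat.eqb (bdeg_t b) dt && Nat.eqb (bdeg_w b) dw
              && Nat.eqb (bdeg_v b) 0
  | [] => false
  end && forallb (fun b => (0 <=? bcoef b)%Z) cs.

Lemma bern_poly_nonneg dt dw dv cs t w v :
  0 <= t <= 1 -> 0 <= w <= 1 -> 0 <= v <= 1 ->
  forallb (fun b => (0 <=? bcoef b)%Z) cs = true -> 0 <= bern_poly dt dw dv cs t w v.
Proof.
  intros Ht Hw Hv. induction cs as [|b cs IH]; simpl; [lra|].
  intros [Hb Hcs]%andb_prop. apply Z.leb_le, IZR_le in Hb.
  apply Rplus_le_le_0_compat; [| exact (IH Hcs)].
  repeat apply Rmult_le_pos; try assumption; apply pow_le; lra.
Qed.

Lemma bern_poly_pos dt dw dv cs t w v :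
  0 < t <= 1 -> 0 < w <= 1 -> 0 <= v < 1 ->
  bern_cert dt dw cs = true -> 0 < bern_poly dt dw dv cs t w v.
Proof.
  intros Ht Hw Hv Hcert. unfold bern_cert in Hcert.
  destruct cs as [|[c i j k] cs]; [discriminate|].
  apply andb_prop in Hcert as [Hhead Hall].
  simpl in Hhead, Hall. apply andb_prop in Hall as [_ Hcs].
  repeat (apply andb_prop in Hhead as [Hhead ?]).
  apply Z.ltb_lt, IZR_lt in Hhead.
  repeat match goal with H : Nat.eqb _ _ = true |- _ => apply Nat.eqb_eq in H; subst end.
  simpl. apply Rplus_lt_le_0_compat.
  - unfold bern. rewrite !Nat.sub_diag, Nat.sub_0_r. simpl.
    repeat apply Rmult_lt_0_compat; try apply pow_lt; lra.
  - apply bern_poly_nonneg; auto; lra.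
Qed.

(** * The critical values of z and the point P6 *)

(* [V6 g z = -1/g] exactly at [z = zc g]. *)
Definition zc (g : R) : R := (g - 1) / (g * (3 * g - 2)).

Lemma frac_lt_sqrt_frac n e b d R : 0 < e -> 0 < d -> 0 <= n * d + b * e ->
  (n * d + b * e) ^ 2 < R * e ^ 2 -> n / e < (sqrt R - b) / d.
Proof.
  intros He Hd Hx Hlt.
  assert (Hs : n * d + b * e < sqrt R * e).
  { assert (HR : 0 <= R) by nra.
    assert (H := sqrt_lt_1_alt _ _ (conj (pow2_ge_0 (n * d + b * e)) Hlt)).
    rewrite sqrt_pow2, sqrt_mult_alt, sqrt_pow2 in H by lra. exact H. }
  apply (Rmult_lt_reg_r (e * d)); [nra|].
  replace (n / e * (e * d)) with (n * d) by (field; lra).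
  replace ((sqrt R - b) / d * (e * d)) with ((sqrt R - b) * e) by (field; lra). lra.
Qed.

Lemma sqrt_frac_lt_frac n e b d R : 0 < e -> 0 < d -> 0 <= R -> 0 <= n * d + b * e ->
  R * e ^ 2 < (n * d + b * e) ^ 2 -> (sqrt R - b) / d < n / e.
Proof.
  intros He Hd HR Hx Hlt.
  assert (Hs : sqrt R * e < n * d + b * e).
  { assert (H := sqrt_lt_1_alt _ _ (conj (Rmult_le_pos _ _ HR (pow2_ge_0 e)) Hlt)).
    rewrite sqrt_pow2, sqrt_mult_alt, sqrt_pow2 in H by lra. exact H. }
  apply (Rmult_lt_reg_r (e * d)); [nra|].
  replace (n / e * (e * d)) with (n * d) by (field; lra).
  replace ((sqrt R - b) / d * (e * d)) with ((sqrt R - b) * e) by (field; lra). lra.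
Qed.

Lemma zmin_lt_zg_lt_zc m g : (m = 1%nat \/ m = 2%nat) -> 1 < g <= 2 ->
  zmin g < zg m g < zc g.
Proof.
  intros Hm Hg. unfold zmin, zg, zc.
  set (t := g - 1). replace g with (1 + t) by (unfold t; ring).
  assert (Ht : 0 < t <= 1) by (unfold t; lra). clearbody t.
  assert (Ht2 : t ^ 2 <= t) by nra. assert (Ht3 : t ^ 3 <= t ^ 2) by nra.
  assert (Ht4 : t ^ 4 <= t ^ 3) by nra. assert (Ht5 : t ^ 5 <= t ^ 4) by nra.
  assert (Ht6 : t ^ 6 <= t ^ 5) by nra. assert (0 < t ^ 3) by (apply pow_lt; lra).
  destruct Hm as [-> | ->]; cbn [Nat.eqb];
    (split; [apply frac_lt_sqrt_frac | apply sqrt_frac_lt_frac]; nra).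
Qed.

Lemma V6_disc_pos g z : 1 < g <= 2 -> 0 < z < zc g ->
  0 < 1 - 2 * (g + 2) * z + (g - 2) ^ 2 * z ^ 2.
Proof.
  intros Hg [Hz0 Hz]. unfold zc in Hz. rewrite <- Rlt_div_r in Hz by nra.
  assert (2 * (g + 2) * (g - 1) <= g * (3 * g - 2)) by nra.
  assert (2 * (g + 2) * z < 1) by nra. nra.
Qed.

Lemma V6_quadratic g z : 0 <= 1 - 2 * (g + 2) * z + (g - 2) ^ 2 * z ^ 2 ->
  z * (2 + (2 - g) * V6 g z) = - V6 g z * (1 + V6 g z).
Proof.
  intros Hd. unfold V6, wz.
  assert (Hw := pow2_sqrt _ Hd). nra.
Qed.

Lemma V1_le_V6 g z : 1 < g <= 2 -> zmin g <= z < zc g -> V1g g <= V6 g z.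
Proof.
  intros Hg [Hz1 Hz2].
  assert (Hz0 : 0 < zmin g) by (unfold zmin; apply Rdiv_lt_0_compat; nra).
  assert (Hd := V6_disc_pos g z Hg ltac:(lra)).
  unfold zmin in Hz1. rewrite Rle_div_l in Hz1 by nra.
  unfold zc in Hz2. rewrite <- Rlt_div_r in Hz2 by nra.
  unfold V1g, V6, wz.
  set (w := sqrt _). assert (Hw0 : 0 <= w) by apply sqrt_pos.
  assert (Hw2 : w ^ 2 = 1 - 2 * (g + 2) * z + (g - 2) ^ 2 * z ^ 2) by (apply pow2_sqrt; lra).
  clearbody w.
  set (M := -1 + (g - 2) * z + 4 / (g + 1)).
  assert (HM : 0 <= M).
  { unfold M. assert (4 / (g + 1) >= 4 / 3).
    { apply Rle_ge, Rmult_le_compat_l; [lra | apply Rinv_le_contravar; lra]. }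
    nra. }
  assert (HM2 : M ^ 2 - w ^ 2 = 8 / (g + 1) ^ 2 * (z * ((2 * g - 1) * (g + 1)) - (g - 1))).
  { rewrite Hw2. unfold M. field. lra. }
  assert (0 <= 8 / (g + 1) ^ 2 * (z * ((2 * g - 1) * (g + 1)) - (g - 1))).
  { apply Rmult_le_pos; [apply Rlt_le, Rdiv_lt_0_compat; nra | lra]. }
  assert (w <= M) by nra.
  unfold M in *. assert (-2 / (g + 1) = - (4 / (g + 1)) / 2) by (field; lra). lra.
Qed.

Lemma V6_lt_inv_gam g z : 1 < g <= 2 -> 0 < z < zc g -> V6 g z < - 1 / g.
Proof.
  intros Hg Hz.
  assert (Hd := V6_disc_pos g z Hg Hz).
  destruct Hz as [Hz0 Hz]. unfold zc in Hz. rewrite <- Rlt_div_r in Hz by nra.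
  unfold V6, wz.
  set (w := sqrt _). assert (Hw0 : 0 <= w) by apply sqrt_pos.
  assert (Hw2 : w ^ 2 = 1 - 2 * (g + 2) * z + (g - 2) ^ 2 * z ^ 2) by (apply pow2_sqrt; lra).
  clearbody w.
  set (N := -1 + (g - 2) * z + 2 / g).
  assert (HN2 : w ^ 2 - N ^ 2 = 4 * ((g - 1) - z * (g * (3 * g - 2))) / g ^ 2).
  { rewrite Hw2. unfold N. field. lra. }
  assert (0 < 4 * ((g - 1) - z * (g * (3 * g - 2))) / g ^ 2) by (apply Rdiv_lt_0_compat; nra).
  assert (N < w) by nra.
  unfold N in *. assert (-1 / g = - (2 / g) / 2) by (field; lra). lra.
Qed.

Lemma line_at_V1_lt_C1 g p : 1 < g <= 2 -> p < - 1 / g -> 1 + 2 * p - V1g g < C1g g.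
Proof.
  intros Hg Hp. rewrite <- Rlt_div_r in Hp by lra.
  unfold V1g, C1g. set (s := sqrt _).
  assert (Hs0 : 0 <= s) by apply sqrt_pos.
  assert (Hs2 : s ^ 2 = 2 * g * (g - 1)) by (apply pow2_sqrt; nra).
  clearbody s.
  assert (Hsg : (g - 1) * (g + 2) <= s * g).
  { assert (((g - 1) * (g + 2)) ^ 2 <= (s * g) ^ 2).
    { replace ((s * g) ^ 2) with (s ^ 2 * g ^ 2) by ring. rewrite Hs2.
      assert (0 <= (g - 1) * (g + 1) * (g - 2) ^ 2) by (apply Rmult_le_pos; nra). nra. }
    assert (0 <= s * g) by nra. nra. }
  replace (1 + 2 * p - -2 / (g + 1)) with (((1 + 2 * p) * (g + 1) + 2) / (g + 1))
    by (field; lra).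
  apply Rmult_lt_compat_r; [apply Rinv_0_lt_compat; lra |]. nra.
Qed.

(** * Sign conditions at P6 and along the line *)

Definition Gf_dV (m : nat) (g z V C : R) : R :=
  C ^ 2 * (INR m + 1)
  - ((1 + V) * (lam m g z + V) + V * (lam m g z + V) + V * (1 + V)).
Definition Gf_dC (m : nat) (z V C : R) : R := 2 * C * ((INR m + 1) * V + 2 * INR m * z).
Definition Ff_dC (m : nat) (g z V C : R) : R :=
  3 * C ^ 2 * (1 + INR m * z / (1 + V)) - a1c m g * (1 + V) ^ 2 + a2c m g z * (1 + V)
  - a3c m g z.
Definition Ff_dV (m : nat) (g z V C : R) : R :=
  C * (C ^ 2 * (- (INR m * z) / (1 + V) ^ 2) - 2 * a1c m g * (1 + V) + a2c m g z).

Lemma GV6_eq m g z : GV6 m g z = Gf_dV m g z (V6 g z) (C6 g z).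
Proof. unfold GV6. apply is_derive_unique. unfold Gf, Gf_dV. auto_derive; [auto | ring]. Qed.

Lemma GC6_eq m g z : GC6 m g z = Gf_dC m z (V6 g z) (C6 g z).
Proof. unfold GC6. apply is_derive_unique. unfold Gf, Gf_dC. auto_derive; [auto | ring]. Qed.

Lemma FC6_eq m g z : 1 + V6 g z <> 0 -> FC6 m g z = Ff_dC m g z (V6 g z) (C6 g z).
Proof.
  intros H. unfold FC6. apply is_derive_unique. unfold Ff, Ff_dC.
  auto_derive; [auto | field; auto].
Qed.

Lemma FV6_eq m g z : 1 + V6 g z <> 0 -> FV6 m g z = Ff_dV m g z (V6 g z) (C6 g z).
Proof.
  intros H. unfold FV6. apply is_derive_unique. unfold Ff, Ff_dV.
  auto_derive; [auto | field; auto].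
Qed.

(* The two roots have opposite signs, and the quadratic is positive at -1. *)
Lemma quadratic_neg_root_gt_m1 a b q c :
  a < 0 -> q < 0 -> 0 < - a * (-1) ^ 2 + b * (-1) + q ->
  c < 0 -> - a * c ^ 2 + b * c + q = 0 -> -1 < c.
Proof.
  intros Ha Hq Hm1 Hc Hroot.
  assert (Hlin : - a * c + b < 0) by nra.
  assert (Hfac : (c + 1) * (- a * (c - 1) + b) = - (- a * (-1) ^ 2 + b * (-1) + q)) by nra.
  nra.
Qed.

Lemma opp_div_lt_0 a b : 0 < a -> 0 < b -> - a / b < 0.
Proof. intros Ha Hb. apply Rdiv_neg_pos; lra. Qed.

Lemma div_gt_m1_of_neg F G : G < 0 -> F + G < 0 -> -1 < F / G.
Proof.
  intros HG HFG. replace (F / G) with (-1 + (- (F + G)) / (- G)) by (field; lra).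
  enough (0 < (- (F + G)) / (- G)) by lra. apply Rdiv_lt_0_compat; lra.
Qed.

(* Bernstein coefficients, in (t, w, v), of the numerators in the identities below. *)
Definition G_line_cert (m : nat) : list bterm :=
  match m with
  | 1%nat =>
    [ BT 648 5 3 0; BT 592 5 0 0; BT 1184 5 0 1; BT 592 5 0 2; BT 1896 5 1 0;
      BT 3984 5 1 1; BT 2088 5 1 2; BT 1944 5 2 0; BT 4332 5 2 1;
      BT 2400 5 2 2; BT 1548 5 3 1; BT 912 5 3 2; BT 1688 4 0 0; BT 3376 4 0 1;
      BT 1688 4 0 2; BT 5656 4 1 0; BT 11800 4 1 1; BT 6144 4 1 2;
      BT 6030 4 2 0; BT 13220 4 2 1; BT 7224 4 2 2; BT 2079 4 3 0;
      BT 4836 4 3 1; BT 2792 4 3 2; BT 1868 3 0 0; BT 3736 3 0 1;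
      BT 1868 3 0 2; BT 6570 3 1 0; BT 13604 3 1 1; BT 7034 3 1 2;
      BT 7311 3 2 0; BT 15741 3 2 1; BT 8464 3 2 2; BT 2619 3 3 0;
      BT 5905 3 3 1; BT 3322 3 3 2; BT 1010 2 0 0; BT 2020 2 0 1;
      BT 1010 2 0 2; BT 3724 2 1 0; BT 7658 2 1 1; BT 3934 2 1 2;
      BT 4327 2 2 0; BT 9151 2 2 1; BT 4838 2 2 2; BT 1614 2 3 0;
      BT 3521 2 3 1; BT 1922 2 3 2; BT 268 1 0 0; BT 536 1 0 1; BT 268 1 0 2;
      BT 1032 1 1 0; BT 2110 1 1 1; BT 1078 1 1 2; BT 1248 1 2 0;
      BT 2598 1 2 1; BT 1352 1 2 2; BT 484 1 3 0; BT 1024 1 3 1; BT 542 1 3 2;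
      BT 28 0 0 0; BT 56 0 0 1; BT 28 0 0 2; BT 112 0 1 0; BT 228 0 1 1;
      BT 116 0 1 2; BT 140 0 2 0; BT 288 0 2 1; BT 148 0 2 2; BT 56 0 3 0;
      BT 116 0 3 1; BT 60 0 3 2 ]
  | _ =>
    [ BT 864 5 3 0; BT 800 5 0 0; BT 1600 5 0 1; BT 800 5 0 2; BT 2544 5 1 0;
      BT 5376 5 1 1; BT 2832 5 1 2; BT 2592 5 2 0; BT 5832 5 2 1;
      BT 3264 5 2 2; BT 2088 5 3 1; BT 1248 5 3 2; BT 2288 4 0 0;
      BT 4576 4 0 1; BT 2288 4 0 2; BT 7600 4 1 0; BT 15952 4 1 1;
      BT 8352 4 1 2; BT 8028 4 2 0; BT 17784 4 2 1; BT 9824 4 2 2;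
      BT 2754 4 3 0; BT 6492 4 3 1; BT 3808 4 3 2; BT 2552 3 0 0;
      BT 5104 3 0 1; BT 2552 3 0 2; BT 8892 3 1 0; BT 18528 3 1 1;
      BT 9636 3 1 2; BT 9786 3 2 0; BT 21294 3 2 1; BT 11576 3 2 2;
      BT 3474 3 3 0; BT 7942 3 3 1; BT 4540 3 3 2; BT 1396 2 0 0;
      BT 2792 2 0 1; BT 1396 2 0 2; BT 5104 2 1 0; BT 10564 2 1 1;
      BT 5460 2 1 2; BT 5866 2 2 0; BT 12538 2 2 1; BT 6700 2 2 2;
      BT 2164 2 3 0; BT 4786 2 3 1; BT 2652 2 3 2; BT 376 1 0 0; BT 752 1 0 1;
      BT 376 1 0 2; BT 1440 1 1 0; BT 2964 1 1 1; BT 1524 1 1 2; BT 1728 1 2 0;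
      BT 3636 1 2 1; BT 1912 1 2 2; BT 664 1 3 0; BT 1424 1 3 1; BT 764 1 3 2;
      BT 328 0 1 1; BT 168 0 1 2; BT 416 0 2 1; BT 216 0 2 2; BT 168 0 3 1;
      BT 88 0 3 2; BT 40 0 0 0; BT 80 0 0 1; BT 40 0 0 2; BT 160 0 1 0;
      BT 200 0 2 0; BT 80 0 3 0 ]
  end.

Definition FG_line_cert (m : nat) : list bterm :=
  match m with
  | 1%nat =>
    [ BT 648 7 4 0; BT 7104 6 0 0; BT 21312 6 0 1; BT 21312 6 0 2;
      BT 7104 6 0 3; BT 31424 6 1 0; BT 91192 6 1 1; BT 88112 6 1 2;
      BT 28344 6 1 3; BT 48636 6 2 0; BT 137496 6 2 1; BT 128260 6 2 2;
      BT 39400 6 2 3; BT 30240 6 3 0; BT 84510 6 3 1; BT 76736 6 3 2;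
      BT 22304 6 3 3; BT 6021 6 4 0; BT 17172 6 4 1; BT 15540 6 4 2;
      BT 4224 6 4 3; BT 1440 7 0 0; BT 4320 7 0 1; BT 4320 7 0 2;
      BT 1440 7 0 3; BT 5952 7 1 0; BT 17360 7 1 1; BT 16864 7 1 2;
      BT 5456 7 1 3; BT 8424 7 2 0; BT 24120 7 2 1; BT 22800 7 2 2;
      BT 7104 7 2 3; BT 4536 7 3 0; BT 13068 7 3 1; BT 12216 7 3 2;
      BT 3648 7 3 3; BT 2052 7 4 1; BT 2016 7 4 2; BT 576 7 4 3;
      BT 14256 5 0 0; BT 42768 5 0 1; BT 42768 5 0 2; BT 14256 5 0 3;
      BT 66976 5 1 0; BT 193516 5 1 1; BT 186104 5 1 2; BT 59564 5 1 3;
      BT 111378 5 2 0; BT 311710 5 2 1; BT 287604 5 2 2; BT 87272 5 2 3;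
      BT 76302 5 3 0; BT 209016 5 3 1; BT 185870 5 3 2; BT 52860 5 3 3;
      BT 17793 5 4 0; BT 48528 5 4 1; BT 42098 5 4 2; BT 11056 5 4 3;
      BT 15248 4 0 0; BT 45744 4 0 1; BT 45744 4 0 2; BT 15248 4 0 3;
      BT 75744 4 1 0; BT 218034 4 1 1; BT 208836 4 1 2; BT 66546 4 1 3;
      BT 134113 4 2 0; BT 372256 4 2 1; BT 340321 4 2 2; BT 102178 4 2 3;
      BT 99174 4 3 0; BT 267662 4 3 1; BT 234158 4 3 2; BT 65390 4 3 3;
      BT 25662 4 4 0; BT 68090 4 4 1; BT 57393 4 4 2; BT 14670 4 4 3;
      BT 9466 3 0 0; BT 28398 3 0 1; BT 28398 3 0 2; BT 9466 3 0 3;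
      BT 49540 3 1 0; BT 142172 3 1 1; BT 135724 3 1 2; BT 43092 3 1 3;
      BT 92857 3 2 0; BT 256068 3 2 1; BT 232375 3 2 2; BT 69164 3 2 3;
      BT 73304 3 3 0; BT 195652 3 3 1; BT 169024 3 3 2; BT 46532 3 3 3;
      BT 20552 3 4 0; BT 53516 3 4 1; BT 44191 3 4 2; BT 11074 3 4 3;
      BT 3432 2 0 0; BT 10296 2 0 1; BT 10296 2 0 2; BT 3432 2 0 3;
      BT 18860 2 1 0; BT 54002 2 1 1; BT 51424 2 1 2; BT 16282 2 1 3;
      BT 37254 2 2 0; BT 102254 2 2 1; BT 92298 2 2 2; BT 27298 2 2 3;
      BT 31168 2 3 0; BT 82564 2 3 1; BT 70728 2 3 2; BT 19294 2 3 3;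
      BT 9344 2 4 0; BT 24040 2 4 1; BT 19598 2 4 2; BT 4862 2 4 3;
      BT 676 1 0 0; BT 2028 1 0 1; BT 2028 1 0 2; BT 676 1 0 3; BT 3888 1 1 0;
      BT 11116 1 1 1; BT 10568 1 1 2; BT 3340 1 1 3; BT 8060 1 2 0;
      BT 22064 1 2 1; BT 19856 1 2 2; BT 5852 1 2 3; BT 7104 1 3 0;
      BT 18752 1 3 1; BT 16008 1 3 2; BT 4356 1 3 3; BT 2256 1 4 0;
      BT 5776 1 4 1; BT 4692 1 4 2; BT 1168 1 4 3; BT 56 0 0 0; BT 168 0 0 1;
      BT 168 0 0 2; BT 56 0 0 3; BT 336 0 1 0; BT 960 0 1 1; BT 912 0 1 2;
      BT 288 0 1 3; BT 728 0 2 0; BT 1992 0 2 1; BT 1792 0 2 2; BT 528 0 2 3;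
      BT 672 0 3 0; BT 1776 0 3 1; BT 1520 0 3 2; BT 416 0 3 3; BT 224 0 4 0;
      BT 576 0 4 1; BT 472 0 4 2; BT 120 0 4 3 ]
  | _ =>
    [ BT 1296 7 4 0; BT 10112 6 0 0; BT 30336 6 0 1; BT 30336 6 0 2;
      BT 10112 6 0 3; BT 44864 6 1 0; BT 130672 6 1 1; BT 126752 6 1 2;
      BT 40944 6 1 3; BT 70008 6 2 0; BT 199504 6 2 1; BT 187336 6 2 2;
      BT 57840 6 2 3; BT 44496 6 3 0; BT 126012 6 3 1; BT 115408 6 3 2;
      BT 33568 6 3 3; BT 9450 6 4 0; BT 27432 6 4 1; BT 25032 6 4 2;
      BT 6720 6 4 3; BT 2112 7 0 0; BT 6336 7 0 1; BT 6336 7 0 2;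
      BT 2112 7 0 3; BT 8832 7 1 0; BT 25888 7 1 1; BT 25280 7 1 2;
      BT 8224 7 1 3; BT 12816 7 2 0; BT 37104 7 2 1; BT 35424 7 2 2;
      BT 11136 7 2 3; BT 7344 7 3 0; BT 21528 7 3 1; BT 20400 7 3 2;
      BT 6144 7 3 3; BT 4104 7 4 1; BT 4032 7 4 2; BT 1152 7 4 3;
      BT 19936 5 0 0; BT 59808 5 0 1; BT 59808 5 0 2; BT 19936 5 0 3;
      BT 93472 5 1 0; BT 270808 5 1 1; BT 261200 5 1 2; BT 83864 5 1 3;
      BT 155348 5 2 0; BT 437212 5 2 1; BT 405016 5 2 2; BT 123152 5 2 3;
      BT 106884 5 3 0; BT 295408 5 3 1; BT 263652 5 3 2; BT 74536 5 3 3;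
      BT 25434 5 4 0; BT 70272 5 4 1; BT 61084 5 4 2; BT 15632 5 4 3;
      BT 21152 4 0 0; BT 63456 4 0 1; BT 63456 4 0 2; BT 21152 4 0 3;
      BT 104560 4 1 0; BT 301636 4 1 1; BT 289592 4 1 2; BT 92516 4 1 3;
      BT 184146 4 2 0; BT 513224 4 2 1; BT 470306 4 2 2; BT 141228 4 2 3;
      BT 135556 4 3 0; BT 367980 4 3 1; BT 322004 4 3 2; BT 89020 4 3 3;
      BT 35124 4 4 0; BT 93916 4 4 1; BT 78858 4 4 2; BT 19476 4 4 3;
      BT 13124 3 0 0; BT 39372 3 0 1; BT 39372 3 0 2; BT 13124 3 0 3;
      BT 68272 3 1 0; BT 196320 3 1 1; BT 187824 3 1 2; BT 59776 3 1 3;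
      BT 127018 3 2 0; BT 351488 3 2 1; BT 319542 3 2 2; BT 95072 3 2 3;
      BT 99408 3 3 0; BT 266464 3 3 1; BT 229968 3 3 2; BT 62624 3 3 3;
      BT 27664 3 4 0; BT 72368 3 4 1; BT 59374 3 4 2; BT 14364 3 4 3;
      BT 4784 2 0 0; BT 14352 2 0 1; BT 14352 2 0 2; BT 4784 2 0 3;
      BT 26144 2 1 0; BT 75020 2 1 1; BT 71608 2 1 2; BT 22732 2 1 3;
      BT 51268 2 2 0; BT 141244 2 2 1; BT 127788 2 2 2; BT 37812 2 2 3;
      BT 42496 2 3 0; BT 113072 2 3 1; BT 96864 2 3 2; BT 26212 2 3 3;
      BT 12608 2 4 0; BT 32576 2 4 1; BT 26428 2 4 2; BT 6380 2 4 3;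
      BT 952 1 0 0; BT 2856 1 0 1; BT 2856 1 0 2; BT 952 1 0 3; BT 5456 1 1 0;
      BT 15640 1 1 1; BT 14912 1 1 2; BT 4728 1 1 3; BT 11256 1 2 0;
      BT 30960 1 2 1; BT 27968 1 2 2; BT 8264 1 2 3; BT 9856 1 3 0;
      BT 26176 1 3 1; BT 22416 1 3 2; BT 6088 1 3 3; BT 3104 1 4 0;
      BT 8000 1 4 1; BT 6504 1 4 2; BT 1600 1 4 3; BT 80 0 0 0; BT 240 0 0 1;
      BT 240 0 0 2; BT 80 0 0 3; BT 480 0 1 0; BT 1376 0 1 1; BT 1312 0 1 2;
      BT 416 0 1 3; BT 1040 0 2 0; BT 2864 0 2 1; BT 2592 0 2 2; BT 768 0 2 3;
      BT 960 0 3 0; BT 2560 0 3 1; BT 2208 0 3 2; BT 608 0 3 3; BT 320 0 4 0;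
      BT 832 0 4 1; BT 688 0 4 2; BT 176 0 4 3 ]
  end.

Definition Gf_dC_cert (m : nat) : list bterm :=
  match m with
  | 1%nat =>
    [ BT 2916 6 5 0; BT 1280 6 0 0; BT 7872 6 1 0; BT 19008 6 2 0;
      BT 22464 6 3 0; BT 12960 6 4 0; BT 3712 5 0 0; BT 24064 5 1 0;
      BT 61056 5 2 0; BT 75600 5 3 0; BT 45576 5 4 0; BT 10692 5 5 0;
      BT 4480 4 0 0; BT 30496 4 1 0; BT 81120 4 2 0; BT 105120 4 3 0;
      BT 66204 4 4 0; BT 16200 4 5 0; BT 2880 3 0 0; BT 20512 3 1 0;
      BT 57056 3 2 0; BT 77252 3 3 0; BT 50784 3 4 0; BT 12960 3 5 0;
      BT 1040 2 0 0; BT 7724 2 1 0; BT 22404 2 2 0; BT 31624 2 3 0;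
      BT 21664 2 4 0; BT 5760 2 5 0; BT 200 1 0 0; BT 1544 1 1 0;
      BT 4656 1 2 0; BT 6832 1 3 0; BT 4864 1 4 0; BT 1344 1 5 0; BT 16 0 0 0;
      BT 128 0 1 0; BT 400 0 2 0; BT 608 0 3 0; BT 448 0 4 0; BT 128 0 5 0 ]
  | _ =>
    [ BT 3888 6 5 0; BT 1792 6 0 0; BT 10944 6 1 0; BT 26208 6 2 0;
      BT 30672 6 3 0; BT 17496 6 4 0; BT 5248 5 0 0; BT 33792 5 1 0;
      BT 85056 5 2 0; BT 104328 5 3 0; BT 62208 5 4 0; BT 14418 5 5 0;
      BT 6400 4 0 0; BT 43296 4 1 0; BT 114320 4 2 0; BT 146844 4 3 0;
      BT 91530 4 4 0; BT 22140 4 5 0; BT 4160 3 0 0; BT 29472 3 1 0;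
      BT 81456 3 2 0; BT 109438 3 3 0; BT 71280 3 4 0; BT 18000 3 5 0;
      BT 1520 2 0 0; BT 11244 2 1 0; BT 32454 2 2 0; BT 45532 2 3 0;
      BT 30960 2 4 0; BT 8160 2 5 0; BT 296 1 0 0; BT 2280 1 1 0;
      BT 6856 1 2 0; BT 10024 1 3 0; BT 7104 1 4 0; BT 1952 1 5 0; BT 24 0 0 0;
      BT 192 0 1 0; BT 600 0 2 0; BT 912 0 3 0; BT 672 0 4 0; BT 192 0 5 0 ]
  end.

Definition Ff_dV_cert (m : nat) : list bterm :=
  match m with
  | 1%nat =>
    [ BT 4860 7 5 0; BT 5344 5 0 0; BT 41840 5 1 0; BT 129376 5 2 0;
      BT 197226 5 3 0; BT 147933 5 4 0; BT 43551 5 5 0; BT 3232 6 0 0;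
      BT 24384 6 1 0; BT 72768 6 2 0; BT 107244 6 3 0; BT 77922 6 4 0;
      BT 22275 6 5 0; BT 832 7 0 0; BT 6048 7 1 0; BT 17424 7 2 0;
      BT 24840 7 3 0; BT 17496 7 4 0; BT 4880 4 0 0; BT 39632 4 1 0;
      BT 126980 4 2 0; BT 200293 4 3 0; BT 155169 4 4 0; BT 47070 4 5 0;
      BT 2660 3 0 0; BT 22394 3 1 0; BT 74327 3 2 0; BT 121321 3 3 0;
      BT 97104 3 4 0; BT 30360 3 5 0; BT 866 2 0 0; BT 7552 2 1 0;
      BT 25955 2 2 0; BT 43834 2 3 0; BT 36248 2 4 0; BT 11680 2 5 0;
      BT 156 1 0 0; BT 1408 1 1 0; BT 5008 1 2 0; BT 8748 1 3 0; BT 7472 1 4 0;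
      BT 2480 1 5 0; BT 12 0 0 0; BT 112 0 1 0; BT 412 0 2 0; BT 744 0 3 0;
      BT 656 0 4 0; BT 224 0 5 0 ]
  | _ =>
    [ BT 5832 7 5 0; BT 5952 5 0 0; BT 47776 5 1 0; BT 150816 5 2 0;
      BT 233748 5 3 0; BT 177498 5 4 0; BT 52650 5 5 0; BT 3520 6 0 0;
      BT 27328 6 1 0; BT 83520 6 2 0; BT 125496 6 3 0; BT 92556 6 4 0;
      BT 26730 6 5 0; BT 896 7 0 0; BT 6720 7 1 0; BT 19872 7 2 0;
      BT 28944 7 3 0; BT 20736 7 4 0; BT 5600 4 0 0; BT 46464 4 1 0;
      BT 151512 4 2 0; BT 242306 4 3 0; BT 189546 4 4 0; BT 57780 4 5 0;
      BT 3160 3 0 0; BT 27108 3 1 0; BT 91358 3 2 0; BT 150874 3 3 0;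
      BT 121696 3 4 0; BT 38160 3 5 0; BT 1068 2 0 0; BT 9476 2 1 0;
      BT 33030 2 2 0; BT 56388 2 3 0; BT 46960 2 4 0; BT 15168 2 5 0;
      BT 200 1 0 0; BT 1836 1 1 0; BT 6624 1 2 0; BT 11704 1 3 0;
      BT 10080 1 4 0; BT 3360 1 5 0; BT 16 0 0 0; BT 152 0 1 0; BT 568 0 2 0;
      BT 1040 0 3 0; BT 928 0 4 0; BT 320 0 5 0 ]
  end.

Definition char_quadratic_cert (m : nat) : list bterm :=
  match m with
  | 1%nat =>
    [ BT 1944 8 5 0; BT 35616 6 0 0; BT 222352 6 1 0; BT 535168 6 2 0;
      BT 614250 6 3 0; BT 330993 6 4 0; BT 65421 6 5 0; BT 15648 7 0 0;
      BT 92992 7 1 0; BT 211872 7 2 0; BT 227772 7 3 0; BT 112482 7 4 0;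
      BT 19359 7 5 0; BT 2880 8 0 0; BT 16224 8 1 0; BT 34704 8 2 0;
      BT 34344 8 3 0; BT 14904 8 4 0; BT 44752 5 0 0; BT 292720 5 1 0;
      BT 740788 5 2 0; BT 899745 5 3 0; BT 519243 5 4 0; BT 112572 5 5 0;
      BT 34180 4 0 0; BT 233718 4 1 0; BT 619935 4 2 0; BT 792579 4 3 0;
      BT 485026 4 4 0; BT 112980 4 5 0; BT 16330 3 0 0; BT 116488 3 1 0;
      BT 323025 3 2 0; BT 433116 3 3 0; BT 279352 3 4 0; BT 69136 3 5 0;
      BT 4784 2 0 0; BT 35528 2 1 0; BT 102758 2 2 0; BT 144064 2 3 0;
      BT 97504 2 4 0; BT 25456 2 5 0; BT 788 1 0 0; BT 6080 1 1 0;
      BT 18300 1 2 0; BT 26752 1 3 0; BT 18928 1 4 0; BT 5184 1 5 0;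
      BT 56 0 0 0; BT 448 0 1 0; BT 1400 0 2 0; BT 2128 0 3 0; BT 1568 0 4 0;
      BT 448 0 5 0 ]
  | _ =>
    [ BT 3888 8 5 0; BT 49984 6 0 0; BT 311840 6 1 0; BT 750848 6 2 0;
      BT 864324 6 3 0; BT 469962 6 4 0; BT 95202 6 5 0; BT 22336 7 0 0;
      BT 133120 7 1 0; BT 305088 7 2 0; BT 331992 7 3 0; BT 168372 7 4 0;
      BT 30942 7 5 0; BT 4224 8 0 0; BT 24000 8 1 0; BT 52128 8 2 0;
      BT 53136 8 3 0; BT 24624 8 4 0; BT 62240 5 0 0; BT 405920 5 1 0;
      BT 1024264 5 2 0; BT 1241130 5 3 0; BT 716118 5 4 0; BT 156240 5 5 0;
      BT 47400 4 0 0; BT 322780 4 1 0; BT 852118 4 2 0; BT 1083718 4 3 0;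
      BT 659788 4 4 0; BT 153240 4 5 0; BT 22692 3 0 0; BT 161160 3 1 0;
      BT 444530 3 2 0; BT 592240 3 3 0; BT 379184 3 4 0; BT 93152 3 5 0;
      BT 6688 2 0 0; BT 49480 2 1 0; BT 142436 2 2 0; BT 198512 2 3 0;
      BT 133376 2 4 0; BT 34528 2 5 0; BT 1112 1 0 0; BT 8560 1 1 0;
      BT 25688 1 2 0; BT 37408 1 3 0; BT 26336 1 4 0; BT 7168 1 5 0;
      BT 80 0 0 0; BT 640 0 1 0; BT 2000 0 2 0; BT 3040 0 3 0; BT 2240 0 4 0;
      BT 640 0 5 0 ]
  end.

Ltac expand_cert Hm :=
  destruct Hm as [-> | ->];
  cbv [INR bern_poly bern fold_right Nat.sub bcoef bdeg_t bdeg_w bdeg_v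
       G_line_cert FG_line_cert Gf_dC_cert Ff_dV_cert char_quadratic_cert].

(* gamma = 1 + t, w in (0, 1] places V6 = p affinely between V1 (w = 0) and -1/gamma (w = 1),
   and z is the value for which p solves z (2 + (2 - gamma) V) = - V (1 + V).  Points of
   the line are V = p - v (p - V1) with v in (0, 1). *)
Section LineCoordinates.
Variables (m : nat) (t w g p z : R).
Hypotheses (Hm : m = 1%nat \/ m = 2%nat) (Ht : 0 < t <= 1) (Hw : 0 < w <= 1)
  (Hg : g = 1 + t) (Hp : p = -1 + t * (t + 1 + w) / ((t + 1) * (t + 2)))
  (Hz : z = - p * (1 + p) / (2 + (2 - g) * p)).

Let E := (t + 1) * (t + 2).
Let D := 2 + (2 - g) * p.

(* The last conjunct is [0 < D] with [p] expanded, the form met in [field] side conditions. *)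
Lemma coords_denom_pos :
  0 < (t + 1) * (t + 2) /\ 0 < 1 + p /\ 0 < 2 + (2 - g) * p /\
  0 < 2 * ((t + 1) * (t + 2)) + (1 - t) * (t * (t + 1 + w) - (t + 1) * (t + 2)).
Proof.
  assert (HE : 0 < (t + 1) * (t + 2)) by nra.
  assert (Hp1 : 0 < 1 + p).
  { rewrite Hp. assert (0 < t * (t + 1 + w) / ((t + 1) * (t + 2)))
      by (apply Rdiv_lt_0_compat; nra).
    lra. }
  repeat split; nra.
Qed.

Ltac solve_identity :=
  destruct coords_denom_pos as [HE [Hp1 [HD HD']]];
  unfold E, D, Gf, Ff, Gf_dV, Gf_dC, Ff_dV, Ff_dC, lam, a1c, a2c, a3c;
  rewrite Hz, Hg, Hp; expand_cert Hm; field; repeat split; apply Rgt_not_eq; nra.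

Lemma G_line_eq u v : u = v * t * w / E ->
  Gf m g z (p - u) (1 + 2 * p - (p - u)) =
  - (u * t * bern_poly 5 3 2 (G_line_cert m) t w v) / (D * E ^ 3).
Proof. intros ->. solve_identity. Qed.

Lemma FG_line_eq u v : 0 < v < 1 -> u = v * t * w / E ->
  Ff m g z (p - u) (1 + 2 * p - (p - u)) + Gf m g z (p - u) (1 + 2 * p - (p - u)) =
  - (u * t ^ 2 * bern_poly 7 4 3 (FG_line_cert m) t w v) / (2 * (1 + (p - u)) * D * E ^ 4).
Proof.
  intros Hv ->. assert (0 < t * (w * (1 - v))) by (apply Rmult_lt_0_compat; nra).
  solve_identity.
Qed.

Lemma Gf_dC_P6_eq : Gf_dC m z p (1 + p) =
  - (t ^ 3 * bern_poly 6 5 0 (Gf_dC_cert m) t w 0) / (D * (1 + p) ^ 2 * E ^ 5).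
Proof. solve_identity. Qed.

Lemma Ff_dV_P6_eq : Ff_dV m g z p (1 + p) =
  - (t ^ 4 * bern_poly 7 5 0 (Ff_dV_cert m) t w 0) / (2 * D * (1 + p) ^ 2 * E ^ 5).
Proof. solve_identity. Qed.

Lemma char_quadratic_P6_eq :
  - Gf_dC m z p (1 + p) * (-1) ^ 2 + (Ff_dC m g z p (1 + p) - Gf_dV m g z p (1 + p)) * (-1)
  + Ff_dV m g z p (1 + p) =
  t ^ 3 * bern_poly 8 5 0 (char_quadratic_cert m) t w 0 / (2 * D * (1 + p) ^ 2 * E ^ 5).
Proof. solve_identity. Qed.

Ltac bern_pos Hm :=
  apply bern_poly_pos; [lra | lra | lra | destruct Hm as [-> | ->]; reflexivity].

Ltac pos_factors Hm :=
  unfold D, E; repeat first [ apply Rdiv_lt_0_compat | apply Rmult_lt_0_compat | apply pow_lt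
               | bern_pos Hm | lra ].

Lemma line_param V : V1g g < V < p -> exists v, 0 < v < 1 /\ V = p - v * t * w / E.
Proof.
  intros HV.
  assert (HpV1 : p - V1g g = t * w / E).
  { unfold E, V1g. rewrite Hp, Hg. field. lra. }
  assert (Htw : 0 < t * w / E) by (unfold E; apply Rdiv_lt_0_compat; nra).
  exists ((p - V) / (p - V1g g)). split.
  - split; [apply Rdiv_lt_0_compat; lra |].
    apply Rlt_div_l; lra.
  - rewrite HpV1. field. unfold E. repeat split; nra.
Qed.

Lemma slope_on_line_gt_m1 V : V1g g < V < p ->
  -1 < Ff m g z V (1 + 2 * p - V) / Gf m g z V (1 + 2 * p - V).
Proof.
  intros HV. destruct (line_param V HV) as [v [Hv ->]].
  destruct coords_denom_pos as [HE [Hp1 [HD _]]].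
  set (u := v * t * w / E) in *.
  assert (Hu : 0 < u) by (unfold u; pos_factors Hm).
  assert (H1u : 0 < 1 + (p - u)).
  { assert (-1 < V1g g) by (unfold V1g; apply Rlt_div_r; lra). lra. }
  apply div_gt_m1_of_neg.
  - rewrite (G_line_eq u v eq_refl). apply opp_div_lt_0; pos_factors Hm.
  - rewrite (FG_line_eq u v Hv eq_refl). apply opp_div_lt_0; pos_factors Hm.
Qed.

Lemma neg_slope6_gt_m1 c : V6 g z = p -> neg_slope6 m g z c -> -1 < c.
Proof.
  intros HV6 [Hc Hroot].
  destruct coords_denom_pos as [HE [Hp1 [HD _]]].
  rewrite GV6_eq, GC6_eq, FC6_eq, FV6_eq in Hroot by lra.
  unfold C6 in Hroot. rewrite HV6 in Hroot.
  apply (quadratic_neg_root_gt_m1 (Gf_dC m z p (1 + p))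
           (Ff_dC m g z p (1 + p) - Gf_dV m g z p (1 + p)) (Ff_dV m g z p (1 + p)) c);
    [| | | exact Hc | exact Hroot].
  - rewrite Gf_dC_P6_eq. apply opp_div_lt_0; pos_factors Hm.
  - rewrite Ff_dV_P6_eq. apply opp_div_lt_0; pos_factors Hm.
  - rewrite char_quadratic_P6_eq. pos_factors Hm.
Qed.

End LineCoordinates.

Lemma line_coordinates g p : 1 < g <= 2 -> V1g g < p < - 1 / g ->
  exists t w, 0 < t <= 1 /\ 0 < w <= 1 /\ g = 1 + t /\
              p = -1 + t * (t + 1 + w) / ((t + 1) * (t + 2)).
Proof.
  intros Hg [HV1 Hinv]. unfold V1g in HV1.
  rewrite Rlt_div_l in HV1 by lra. rewrite <- Rlt_div_r in Hinv by lra.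
  exists (g - 1), ((1 + p) * g * (g + 1) / (g - 1) - g).
  split; [lra|]. split; [split|]; [| | split; [ring |]].
  - replace ((1 + p) * g * (g + 1) / (g - 1) - g)
      with (g * ((1 + p) * (g + 1) - (g - 1)) / (g - 1)) by (field; lra).
    apply Rdiv_lt_0_compat; nra.
  - replace ((1 + p) * g * (g + 1) / (g - 1) - g)
      with (1 - (g + 1) * (- 1 - p * g) / (g - 1)) by (field; lra).
    assert (0 < (g + 1) * (- 1 - p * g) / (g - 1)) by (apply Rdiv_lt_0_compat; nra). lra.
  - field. lra.
Qed.

Lemma C_P6_at_V1_le_line m g z f : (m = 1%nat \/ m = 2%nat) -> 1 < g <= 2 ->
  zmin g <= z < zc g -> is_C_P6 m g z f -> f (V1g g) <= 1 + 2 * V6 g z - V1g g.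
Proof.
  intros Hm Hg Hz [_ [_ [Hf6 [[c [Hslope Hdc]] [Hode Hlim]]]]].
  assert (Hzmin : 0 < zmin g) by (unfold zmin; apply Rdiv_lt_0_compat; nra).
  assert (Hinv := V6_lt_inv_gam g z Hg ltac:(lra)).
  assert (Hquad := V6_quadratic g z (Rlt_le _ _ (V6_disc_pos g z Hg ltac:(lra)))).
  unfold C6 in Hf6.
  destruct (V1_le_V6 g z Hg Hz) as [HV1 | HV1]; [| rewrite HV1, Hf6; lra].
  set (p := V6 g z) in *.
  destruct (line_coordinates g p Hg (conj HV1 Hinv)) as [t [w [Ht [Hw [Hgt Hpt]]]]].
  assert (Hp1 : -1 < p) by (assert (-1 < V1g g) by (unfold V1g; apply Rlt_div_r; lra); lra).
  assert (Hzp : z = - p * (1 + p) / (2 + (2 - g) * p)).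
  { apply (Rmult_eq_reg_r (2 + (2 - g) * p)); [rewrite Hquad; field |]; nra. }
  apply (le_of_lt_at_right f (fun V => 1 + 2 * p - V) (V1g g) p HV1 Hlim).
  - apply (continuous_minus (fun _ => 1 + 2 * p) (fun V => V));
      [apply continuous_const | apply continuous_id].
  - apply (below_line_of_crossing_slopes f (fun V => Ff m g z V (f V) / Gf m g z V (f V))
             (V1g g) p (1 + 2 * p) c); [exact HV1 | lra | exact Hdc | | | ].
    + exact (neg_slope6_gt_m1 m t w g p z Hm Ht Hw Hgt Hpt Hzp c eq_refl Hslope).
    + intros V HV. exact (proj2 (Hode V HV)).
    + intros V HV ->. exact (slope_on_line_gt_m1 m t w g p z Hm Ht Hw Hgt Hpt Hzp V HV).
Qed.

Lemma C_P6_at_V1_lt_C1 m g z f : (m = 1%nat \/ m = 2%nat) -> 1 < g <= 2 ->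
  zmin g <= z < zc g -> is_C_P6 m g z f -> f (V1g g) < C1g g.
Proof.
  intros Hm Hg Hz Hf.
  assert (Hzmin : 0 < zmin g) by (unfold zmin; apply Rdiv_lt_0_compat; nra).
  apply (Rle_lt_trans _ _ _ (C_P6_at_V1_le_line m g z f Hm Hg Hz Hf)).
  apply line_at_V1_lt_C1; [exact Hg |]. apply V6_lt_inv_gam; [exact Hg | lra].
Qed.

Theorem mainTheorem12 (m : nat) (gam : R) :
  (m = 1%nat \/ m = 2%nat) -> 1 < gam <= 2 ->
  zmin gam < zg m gam /\
  (forall z f, zmin gam <= z <= zg m gam -> is_C_P6 m gam z f ->
     f (V1g gam) < C1g gam) /\
  (forall z f, zmin gam <= z <= zM gam -> is_C_P6 m gam z f ->
     f (V1g gam) = C1g gam -> zg m gam < z <= zM gam).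
Proof.
  intros Hm Hg.
  destruct (zmin_lt_zg_lt_zc m gam Hm Hg) as [Hzmin Hzg].
  split; [exact Hzmin | split].
  - intros z f Hz Hf. apply (C_P6_at_V1_lt_C1 m gam z f Hm Hg); [lra | exact Hf].
  - intros z f Hz Hf HC1. split; [| lra].
    apply Rnot_le_lt. intros Hle.
    assert (Hlt := C_P6_at_V1_lt_C1 m gam z f Hm Hg ltac:(lra) Hf). lra.
Qed.
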